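(* Let $a,b,c\in\mathbb{C}$ with $a\neq0$, $c\neq0$, $\Re(b)>0$, $\Re(b+a+c)>0$, $\Re(b+a-c)>0$, $\Re(b-a+c)>0$, $\Re(b-a-c)>0$, and $\frac{a+c}{b},\frac{a-c}{b}\notin\{\pm1,\pm3,\pm5,\dots\}$. Put $\tau_1=\frac12-\frac{a+c}{2b}$, $\tau_2=\frac12-\frac{a-c}{2b}$, $\tau_3=\frac12+\frac{a+c}{2b}$, $\tau_4=\frac12+\frac{a-c}{2b}$, assume $1+\tau_j\notin\mathbb{Z}_0^-$ ($j=1,\dots,4$), and let $Q=(b-a-c)(b+a+c)(b-a+c)(b+a-c)$. Then $$ {}_6F_5\!\left(\begin{matrix}1,\ \frac32,\ \tau_1,\ \tau_2,\ \tau_3,\ \tau_4\\ \frac12,\ 1+\tau_1,\ 1+\tau_2,\ 1+\tau_3,\ 1+\tau_4\end{matrix};\,-1\right) =\frac{\pi Q}{4\,a\,c\,b^{2}}\cdot\frac{\sin\!\big(\frac{a\pi}{2b}\big)\sin\!\big(\frac{c\pi}{2b}\big)}{\cos\!\big(\frac{c\pi}{b}\big)+\cos\!\big(\frac{a\pi}{b}\big)}. $$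
   Context: $\mathbb{Z}_0^-=\{0,-1,-2,\dots\}$. The Pochhammer symbol is $(\lambda)_0=1$, $(\lambda)_n=\lambda(\lambda+1)\cdots(\lambda+n-1)$ for $n\ge1$. The generalized hypergeometric series is ${}_pF_q\!\left(\begin{matrix}\alpha_1,\dots,\alpha_p\\ \beta_1,\dots,\beta_q\end{matrix};z\right)=\sum_{n=0}^\infty\frac{(\alpha_1)_n\cdots(\alpha_p)_n}{(\beta_1)_n\cdots(\beta_q)_n}\frac{z^n}{n!}$ (with no $\beta_j\in\mathbb{Z}_0^-$). *)

From Stdlib Require Import Reals List Factorial.
Open Scope R_scope.

Record Cplx : Type := mkC { Re : R ; Im : R }.

Definition RtoC (x : R) : Cplx := mkC x 0.
Definition Cadd (z w : Cplx) : Cplx := mkC (Re z + Re w) (Im z + Im w).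
Definition Copp (z : Cplx) : Cplx := mkC (- Re z) (- Im z).
Definition Csub (z w : Cplx) : Cplx := Cadd z (Copp w).
Definition Cmul (z w : Cplx) : Cplx :=
  mkC (Re z * Re w - Im z * Im w) (Re z * Im w + Im z * Re w).
Definition Cinv (z : Cplx) : Cplx :=
  mkC (Re z / (Re z ^ 2 + Im z ^ 2)) (- Im z / (Re z ^ 2 + Im z ^ 2)).
Definition Cdiv (z w : Cplx) : Cplx := Cmul z (Cinv w).
Definition Cnorm (z : Cplx) : R := sqrt (Re z ^ 2 + Im z ^ 2).

Fixpoint Cpow (z : Cplx) (n : nat) : Cplx :=
  match n with O => RtoC 1 | S k => Cmul (Cpow z k) z end.

Definition Rcosh (y : R) : R := (exp y + exp (- y)) / 2.
Definition Rsinh (y : R) : R := (exp y - exp (- y)) / 2.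
Definition Csin (z : Cplx) : Cplx :=
  mkC (sin (Re z) * Rcosh (Im z)) (cos (Re z) * Rsinh (Im z)).
Definition Ccos (z : Cplx) : Cplx :=
  mkC (cos (Re z) * Rcosh (Im z)) (- (sin (Re z) * Rsinh (Im z))).

Fixpoint poch (x : Cplx) (n : nat) : Cplx :=
  match n with
  | O => RtoC 1
  | S k => Cmul (poch x k) (Cadd x (RtoC (INR k)))
  end.

Definition Cprod (l : list Cplx) : Cplx := fold_right Cmul (RtoC 1) l.

Definition hyp_term (alphas betas : list Cplx) (z : Cplx) (n : nat) : Cplx :=
  Cdiv (Cmul (Cprod (map (fun a => poch a n) alphas)) (Cpow z n))
       (Cmul (Cprod (map (fun b => poch b n) betas)) (RtoC (INR (fact n)))).

Fixpoint Cpartial (f : nat -> Cplx) (n : nat) : Cplx :=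
  match n with
  | O => f O
  | S k => Cadd (Cpartial f k) (f (S k))
  end.

Definition Csums (f : nat -> Cplx) (l : Cplx) : Prop :=
  forall eps : R, eps > 0 ->
    exists N : nat, forall n : nat, (n >= N)%nat -> Cnorm (Csub (Cpartial f n) l) < eps.

Definition pFq_eq (alphas betas : list Cplx) (z l : Cplx) : Prop :=
  Csums (hyp_term alphas betas z) l.

Definition not_odd_int (z : Cplx) : Prop :=
  forall k : nat, z <> RtoC (INR (2 * k + 1)) /\ z <> RtoC (- INR (2 * k + 1)).

Definition not_nonpos_int (z : Cplx) : Prop :=
  forall k : nat, z <> RtoC (- INR k).

(* Put X = (a+c)/b and Y = (a-c)/b, so that tau_1..tau_4 = (1 -+ X)/2,
   (1 -+ Y)/2.  The n-th term of the 6F5 series is, after cancelling the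
   Pochhammer quotients (t)_n/(1+t)_n = t/(t+n), a rational function of
   u = 2n+1, which splits into partial fractions as
       K(X,Y) * (d_X(n) - d_Y(n)),   d_z(n) = (-1)^n u / (u^2 - z^2),
   with K(X,Y) = (1-X^2)(1-Y^2)/(X^2-Y^2).  The whole proof therefore rests on
   the partial-fraction expansion of the secant,
       sum_n (-1)^n (2n+1) / ((2n+1)^2 - z^2) = pi / (4 cos(pi z / 2)),
   valid for every complex z that is not an odd integer.  We prove it from
   scratch: d_z(n) - d_0(n) is O(n^-3), so the series converges (d_0 gives the
   Leibniz series for pi/4); its sum L satisfies cos(pi z/2) L = pi/4 because
   the defects cos(pi z/2) S_k(z) - S_k(0) of the partial sums have bounded
   Cesaro sums.  These Cesaro sums are increments over [0, pi/2] of an explicit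
   primitive whose derivative is (cos(zs) - 1) times a Fejer-type kernel, and
   that product is bounded uniformly in the number of terms. *)

From Stdlib Require Import Reals List Lra Lia ZArith.
From Coquelicot Require Import Rcomplements Hierarchy Derive AutoDerive Series.
Open Scope R_scope.

(** * Complex arithmetic *)

Lemma Ceq (z w : Cplx) : Re z = Re w -> Im z = Im w -> z = w.
Proof. destruct z, w; simpl; intros; subst; reflexivity. Qed.

Lemma Cring : ring_theory (RtoC 0) (RtoC 1) Cadd Cmul Csub Copp (@eq Cplx).
Proof. constructor; intros; apply Ceq; simpl; ring. Qed.

Lemma Cnorm2_neq0 (z : Cplx) : z <> RtoC 0 -> Re z * Re z + Im z * Im z <> 0.
Proof.
  destruct z as [x y]; simpl; intros H E. apply H.
  assert (x = 0) by nra. assert (y = 0) by nra. subst. reflexivity.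
Qed.

Lemma Cfield : field_theory (RtoC 0) (RtoC 1) Cadd Cmul Csub Copp Cdiv Cinv (@eq Cplx).
Proof.
  constructor.
  - exact Cring.
  - intro H. injection H. lra.
  - reflexivity.
  - intros z H. pose proof (Cnorm2_neq0 z H).
    destruct z as [x y]; simpl in *; apply Ceq; simpl; field; nra.
Qed.

Add Field Cfieldf : Cfield.

Lemma Csub_eq0 x y : Csub x y = RtoC 0 -> x = y.
Proof. intros H. replace x with (Cadd (Csub x y) y) by ring. rewrite H. ring. Qed.

Lemma Cmul_neq0 (x y : Cplx) : x <> RtoC 0 -> y <> RtoC 0 -> Cmul x y <> RtoC 0.
Proof.
  intros Hx Hy E. apply Hy.
  replace y with (Cmul (Cinv x) (Cmul x y)) by (field; auto).
  rewrite E. ring.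
Qed.

Lemma Cdiv_neq0 (x y : Cplx) : x <> RtoC 0 -> y <> RtoC 0 -> Cdiv x y <> RtoC 0.
Proof.
  intros Hx Hy E. apply Hx.
  replace x with (Cmul (Cdiv x y) y) by (field; auto). rewrite E. ring.
Qed.

Lemma RtoC_add x y : RtoC (x + y) = Cadd (RtoC x) (RtoC y).
Proof. apply Ceq; simpl; ring. Qed.
Lemma RtoC_mul x y : RtoC (x * y) = Cmul (RtoC x) (RtoC y).
Proof. apply Ceq; simpl; ring. Qed.
Lemma RtoC_opp x : RtoC (- x) = Copp (RtoC x).
Proof. apply Ceq; simpl; ring. Qed.
Lemma RtoC_div x y : y <> 0 -> RtoC (x / y) = Cdiv (RtoC x) (RtoC y).
Proof. intros H. apply Ceq; simpl; field; auto. Qed.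
Lemma RtoC_pow x n : Cpow (RtoC x) n = RtoC (x ^ n).
Proof. induction n; simpl; auto. rewrite IHn, <- RtoC_mul. f_equal; ring. Qed.
Lemma RtoC_neq x y : x <> y -> RtoC x <> RtoC y.
Proof. intros H E. injection E. auto. Qed.

(* The constant 2, written so that [field] sees it as 1 + 1. *)
Notation C2 := (Cadd (RtoC 1) (RtoC 1)).

Lemma RtoC_2 : RtoC 2 = C2.
Proof. apply Ceq; simpl; ring. Qed.
Lemma C2_neq0 : C2 <> RtoC 0.
Proof. rewrite <- RtoC_2. apply RtoC_neq. lra. Qed.
Lemma RtoC_half : RtoC (1 / 2) = Cdiv (RtoC 1) C2.
Proof. rewrite RtoC_div, RtoC_2 by lra. reflexivity. Qed.

Lemma Rsinh_0 : Rsinh 0 = 0.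
Proof. unfold Rsinh. rewrite Ropp_0. lra. Qed.
Lemma Rcosh_0 : Rcosh 0 = 1.
Proof. unfold Rcosh. rewrite Ropp_0, exp_0. lra. Qed.
Lemma Rcosh_pos y : 0 < Rcosh y.
Proof. unfold Rcosh. pose proof (exp_pos y). pose proof (exp_pos (- y)). lra. Qed.
Lemma Rcosh_opp x : Rcosh (- x) = Rcosh x.
Proof. unfold Rcosh. rewrite Ropp_involutive. field. Qed.
Lemma Rsinh_opp x : Rsinh (- x) = - Rsinh x.
Proof. unfold Rsinh. rewrite Ropp_involutive. field. Qed.

Lemma exp_mul_exp_opp x : exp x * exp (- x) = 1.
Proof. rewrite <- exp_plus, Rplus_opp_r, exp_0. reflexivity. Qed.

Lemma Rcosh_add x y : Rcosh (x + y) = Rcosh x * Rcosh y + Rsinh x * Rsinh y.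
Proof.
  unfold Rcosh, Rsinh. rewrite Ropp_plus_distr, !exp_plus. field.
Qed.
Lemma Rsinh_add x y : Rsinh (x + y) = Rsinh x * Rcosh y + Rcosh x * Rsinh y.
Proof. unfold Rcosh, Rsinh. rewrite Ropp_plus_distr, !exp_plus. field. Qed.
Lemma Rcosh_sinh x : Rcosh x ^ 2 - Rsinh x ^ 2 = 1.
Proof. unfold Rcosh, Rsinh. pose proof (exp_mul_exp_opp x). nra. Qed.

Lemma Rsinh_eq0 y : Rsinh y = 0 -> y = 0.
Proof.
  unfold Rsinh. intros H. assert (E : exp y = exp (- y)) by lra.
  apply exp_inv in E. lra.
Qed.

Lemma der_sinh (c : R) : derivable_pt_lim Rsinh c (Rcosh c).
Proof. apply is_derive_Reals. unfold Rsinh, Rcosh. auto_derive; auto; lra. Qed.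
Lemma der_cosh (c : R) : derivable_pt_lim Rcosh c (Rsinh c).
Proof. apply is_derive_Reals. unfold Rsinh, Rcosh. auto_derive; auto; lra. Qed.

Lemma Ccos_add A B : Ccos (Cadd A B) = Csub (Cmul (Ccos A) (Ccos B)) (Cmul (Csin A) (Csin B)).
Proof.
  destruct A as [x y], B as [x' y']. apply Ceq; simpl;
  rewrite ?cos_plus, ?sin_plus, ?Rcosh_add, ?Rsinh_add; ring.
Qed.
Lemma Csin_add A B : Csin (Cadd A B) = Cadd (Cmul (Csin A) (Ccos B)) (Cmul (Ccos A) (Csin B)).
Proof.
  destruct A as [x y], B as [x' y']. apply Ceq; simpl;
  rewrite ?cos_plus, ?sin_plus, ?Rcosh_add, ?Rsinh_add; ring.
Qed.
Lemma Ccos_opp A : Ccos (Copp A) = Ccos A.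
Proof. destruct A as [x y]. apply Ceq; simpl; rewrite ?cos_neg, ?sin_neg, ?Rcosh_opp, ?Rsinh_opp; ring. Qed.
Lemma Csin_opp A : Csin (Copp A) = Copp (Csin A).
Proof. destruct A as [x y]. apply Ceq; simpl; rewrite ?cos_neg, ?sin_neg, ?Rcosh_opp, ?Rsinh_opp; ring. Qed.
Lemma Cpyth A : Cadd (Cmul (Csin A) (Csin A)) (Cmul (Ccos A) (Ccos A)) = RtoC 1.
Proof.
  destruct A as [x y]. pose proof (Rcosh_sinh y). pose proof (sin2_cos2 x). unfold Rsqr in *.
  apply Ceq; simpl; nra.
Qed.
Lemma Csin_RtoC x : Csin (RtoC x) = RtoC (sin x).
Proof. apply Ceq; simpl; rewrite ?Rcosh_0, ?Rsinh_0; ring. Qed.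
Lemma Ccos_RtoC x : Ccos (RtoC x) = RtoC (cos x).
Proof. apply Ceq; simpl; rewrite ?Rcosh_0, ?Rsinh_0; ring. Qed.

Lemma Ccos_add_Ccos_double al ga :
  Cadd (Ccos (Cadd ga ga)) (Ccos (Cadd al al)) =
  Cmul C2 (Cmul (Ccos (Cadd al ga)) (Ccos (Cadd al (Copp ga)))).
Proof.
  rewrite !Ccos_add, Ccos_opp, Csin_opp. apply Csub_eq0.
  pose proof (Cpyth al) as HA. pose proof (Cpyth ga) as HG.
  set (sa := Csin al) in *. set (ca := Ccos al) in *.
  set (sg := Csin ga) in *. set (cg := Ccos ga) in *.
  (* the difference is a combination of the two Pythagorean defects *)
  set (A := Csub (Cadd (Cmul sa sa) (Cmul ca ca)) (RtoC 1)).
  set (G := Csub (Cadd (Cmul sg sg) (Cmul cg cg)) (RtoC 1)).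
  assert (HA0 : A = RtoC 0) by (unfold A; rewrite HA; ring).
  assert (HG0 : G = RtoC 0) by (unfold G; rewrite HG; ring).
  transitivity (Cadd (Cmul G (Cadd (Csub (RtoC 1) (Cmul C2 (Cmul ca ca))) (Cmul C2 A)))
                     (Cmul A (Csub (RtoC 1) (Cmul C2 (Cmul cg cg))))).
  - unfold A, G. ring.
  - rewrite HA0, HG0. ring.
Qed.

Lemma Csin_mul_Csin al ga :
  Cmul (Csin al) (Csin ga) =
  Cdiv (Csub (Ccos (Cadd al (Copp ga))) (Ccos (Cadd al ga))) C2.
Proof. rewrite !Ccos_add, Ccos_opp, Csin_opp. pose proof C2_neq0. field. auto. Qed.

Lemma exp_le_mono (x y : R) : x <= y -> exp x <= exp y.
Proof. intros [H|H]; [left; apply exp_increasing; auto | subst; lra]. Qed.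

Lemma exists_nat_gt (r : R) : exists N : nat, r < INR N.
Proof.
  destruct (archimed r) as [H1 _].
  destruct (Z_le_gt_dec 0 (up r)) as [H|H].
  - exists (Z.to_nat (up r)). rewrite INR_IZR_INZ, Z2Nat.id; auto.
  - exists 0%nat. simpl. apply Z.gt_lt, IZR_lt in H. lra.
Qed.

Lemma Rabs_sqr (x : R) : Rabs x * Rabs x = x ^ 2.
Proof. rewrite <- Rabs_mult, Rabs_right; [ring | nra]. Qed.

Lemma mvt_bound (f f' : R -> R) (x B : R) :
  (forall c, derivable_pt_lim f c (f' c)) ->
  (forall c, Rabs c <= Rabs x -> Rabs (f' c) <= B) ->
  Rabs (f x - f 0) <= B * Rabs x.
Proof.
  intros Hd Hb.
  destruct (Rtotal_order x 0) as [Hx|[Hx|Hx]].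
  - destruct (MVT_cor2 f f' x 0 Hx (fun c _ => Hd c)) as [c [Hc1 Hc2]].
    assert (Rabs (f' c) <= B) by (apply Hb; rewrite !Rabs_left1; lra).
    replace (f x - f 0) with (- (f 0 - f x)) by ring.
    rewrite Rabs_Ropp, Hc1, Rabs_mult, (Rabs_right (0 - x)), (Rabs_left x) by lra.
    replace (0 - x) with (- x) by ring. apply Rmult_le_compat_r; lra.
  - subst. rewrite Rminus_diag, !Rabs_R0.
    specialize (Hb 0). rewrite Rabs_R0 in Hb. pose proof (Rabs_pos (f' 0)). lra.
  - destruct (MVT_cor2 f f' 0 x Hx (fun c _ => Hd c)) as [c [Hc1 Hc2]].
    assert (Rabs (f' c) <= B) by (apply Hb; rewrite !Rabs_right; lra).
    rewrite Hc1, Rabs_mult, (Rabs_right (x - 0)), (Rabs_right x) by lra.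
    rewrite Rminus_0_r. apply Rmult_le_compat_r; lra.
Qed.

Lemma Rabs_sin_le (x : R) : Rabs (sin x) <= Rabs x.
Proof.
  pose proof (mvt_bound sin cos x 1 derivable_pt_lim_sin
    (fun c _ => Rabs_le _ _ (COS_bound c))) as H.
  rewrite sin_0, Rminus_0_r in H. lra.
Qed.

Lemma cos_sub1_le (x : R) : Rabs (cos x - 1) <= x ^ 2.
Proof.
  rewrite <- Rabs_sqr, <- cos_0.
  apply (mvt_bound cos (fun c => - sin c)); [apply derivable_pt_lim_cos|].
  intros c Hc. rewrite Rabs_Ropp. eapply Rle_trans; [apply Rabs_sin_le | exact Hc].
Qed.

Lemma Rcosh_le_exp (y : R) : Rcosh y <= exp (Rabs y).
Proof.
  unfold Rcosh. pose proof (exp_pos y). pose proof (exp_pos (-y)).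
  destruct (Rle_dec 0 y).
  - rewrite Rabs_right by lra. assert (exp (-y) <= exp y) by (apply exp_le_mono; lra). lra.
  - rewrite Rabs_left by lra. assert (exp y <= exp (-y)) by (apply exp_le_mono; lra). lra.
Qed.

Lemma Rsinh_bound (x : R) : Rabs (Rsinh x) <= Rabs x * exp (Rabs x).
Proof.
  rewrite Rmult_comm, <- (Rminus_0_r (Rsinh x)), <- Rsinh_0.
  apply (mvt_bound Rsinh Rcosh x _ der_sinh). intros c Hc.
  rewrite Rabs_right by (left; apply Rcosh_pos).
  eapply Rle_trans; [apply Rcosh_le_exp | apply exp_le_mono; auto].
Qed.

Lemma Rcosh_sub1_bound (x : R) : Rabs (Rcosh x - 1) <= x ^ 2 * exp (Rabs x).
Proof.
  replace (x ^ 2 * exp (Rabs x)) with (Rabs x * exp (Rabs x) * Rabs x)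
    by (rewrite <- Rabs_sqr; ring).
  rewrite <- Rcosh_0. apply (mvt_bound Rcosh Rsinh x _ der_cosh).
  intros c Hc. eapply Rle_trans; [apply Rsinh_bound|].
  apply Rmult_le_compat; auto using Rabs_pos. left; apply exp_pos. apply exp_le_mono; auto.
Qed.

Lemma sqr_le_sin_sqr t : 0 <= t <= PI / 2 -> t ^ 2 <= 9 * sin t ^ 2.
Proof.
  intros [H1 H2]. pose proof PI_4. pose proof PI_RGT_0.
  destruct (SIN t H1 ltac:(lra)) as [Hs _].
  unfold sin_lb, sin_approx, sin_term in Hs. simpl in Hs.
  assert (Ht2 : t <= 2) by lra.
  assert (t - t ^ 3 / 6 <= sin t).
  { eapply Rle_trans; [|exact Hs]. unfold INR, fact, Nat.mul, Nat.add. simpl.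
    assert (0 <= t ^ 2 <= 4) by nra.
    assert (0 <= t ^ 5 * (30240 - 720 * t ^ 2))
      by (apply Rmult_le_pos; [apply pow_le; lra | nra]).
    field_simplify. nra. }
  assert (t / 3 <= sin t) by nra.
  nra.
Qed.

Lemma sqr_le_sin_sqr_abs t : Rabs t <= PI / 2 -> t ^ 2 <= 9 * sin t ^ 2.
Proof.
  intros H. destruct (Rle_dec 0 t).
  - apply sqr_le_sin_sqr. rewrite Rabs_right in H; lra.
  - rewrite Rabs_left in H by lra. replace (t ^ 2) with ((- t) ^ 2) by ring.
    replace (sin t ^ 2) with (sin (- t) ^ 2) by (rewrite sin_neg; ring).
    apply sqr_le_sin_sqr. lra.
Qed.

Lemma exp_abs_mul_le (q t : R) : Rabs t <= 2 -> exp (Rabs (q * t)) <= exp (2 * Rabs q).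
Proof. intros Ht. apply exp_le_mono. rewrite Rabs_mult. pose proof (Rabs_pos q). nra. Qed.

Lemma cos_cosh_sub1_bound (p q t : R) : Rabs t <= 2 ->
  Rabs (cos (p * t) * Rcosh (q * t) - 1) <= (p ^ 2 + q ^ 2) * exp (2 * Rabs q) * t ^ 2.
Proof.
  intros Ht. pose proof (exp_abs_mul_le q t Ht) as HE.
  pose proof (Rcosh_le_exp (q * t)). pose proof (Rcosh_pos (q * t)).
  pose proof (Rcosh_sub1_bound (q * t)). pose proof (cos_sub1_le (p * t)).
  replace (cos (p * t) * Rcosh (q * t) - 1)
    with ((cos (p * t) - 1) * Rcosh (q * t) + (Rcosh (q * t) - 1)) by ring.
  eapply Rle_trans; [apply Rabs_triang|]. rewrite Rabs_mult, (Rabs_right (Rcosh _)) by lra.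
  assert (Rabs (cos (p * t) - 1) * Rcosh (q * t) <= (p * t) ^ 2 * exp (2 * Rabs q))
    by (apply Rmult_le_compat; auto using Rabs_pos; lra).
  assert ((q * t) ^ 2 * exp (Rabs (q * t)) <= (q * t) ^ 2 * exp (2 * Rabs q))
    by (apply Rmult_le_compat_l; [nra | lra]).
  nra.
Qed.

Lemma sin_sinh_bound (p q t : R) : Rabs t <= 2 ->
  Rabs (sin (p * t) * Rsinh (q * t)) <= Rabs p * Rabs q * exp (2 * Rabs q) * t ^ 2.
Proof.
  intros Ht. pose proof (exp_abs_mul_le q t Ht) as HE.
  pose proof (Rsinh_bound (q * t)). pose proof (Rabs_sin_le (p * t)).
  rewrite Rabs_mult in *.
  rewrite <- Rabs_sqr.
  replace (Rabs p * Rabs q * exp (2 * Rabs q) * (Rabs t * Rabs t))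
    with ((Rabs p * Rabs t) * (Rabs q * Rabs t * exp (2 * Rabs q))) by ring.
  apply Rmult_le_compat; auto using Rabs_pos.
  eapply Rle_trans; [eassumption|].
  apply Rmult_le_compat_l; [apply Rmult_le_pos; apply Rabs_pos | exact HE].
Qed.

Definition cos_quad_const (z : Cplx) : R :=
  (Re z ^ 2 + Im z ^ 2 + Rabs (Re z) * Rabs (Im z)) * exp (2 * Rabs (Im z)).

Lemma cos_quad_const_nonneg z : 0 <= cos_quad_const z.
Proof.
  unfold cos_quad_const. apply Rmult_le_pos; [|left; apply exp_pos].
  pose proof (Rabs_pos (Re z)). pose proof (Rabs_pos (Im z)). nra.
Qed.

Lemma Ccos_sub1_bound z t : Rabs t <= 2 ->
  Rabs (Re (Csub (Ccos (Cmul z (RtoC t))) (RtoC 1))) <= cos_quad_const z * t ^ 2 /\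
  Rabs (Im (Csub (Ccos (Cmul z (RtoC t))) (RtoC 1))) <= cos_quad_const z * t ^ 2.
Proof.
  intros Ht. destruct z as [p q]. unfold cos_quad_const; cbn [Re Im Csub Cadd Copp Cmul Ccos RtoC].
  replace (p * t - q * 0) with (p * t) by ring. replace (p * 0 + q * t) with (q * t) by ring.
  pose proof (cos_cosh_sub1_bound p q t Ht). pose proof (sin_sinh_bound p q t Ht).
  assert (0 <= Rabs p * Rabs q * exp (2 * Rabs q) * t ^ 2)
    by (pose proof (exp_pos (2 * Rabs q)); pose proof (Rabs_pos p); pose proof (Rabs_pos q);
        apply Rmult_le_pos; [apply Rmult_le_pos|]; nra).
  assert (0 <= (p ^ 2 + q ^ 2) * exp (2 * Rabs q) * t ^ 2)
    by (pose proof (exp_pos (2 * Rabs q)); apply Rmult_le_pos; [apply Rmult_le_pos|]; nra).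
  split.
  - replace (cos (p * t) * Rcosh (q * t) + - (1)) with (cos (p * t) * Rcosh (q * t) - 1) by ring.
    nra.
  - replace (- (sin (p * t) * Rsinh (q * t)) + - (0)) with (- (sin (p * t) * Rsinh (q * t))) by ring.
    rewrite Rabs_Ropp. nra.
Qed.

(** * Series of complex numbers *)

Lemma Re_Cpartial f n : Re (Cpartial f n) = sum_f_R0 (fun k => Re (f k)) n.
Proof. induction n; simpl; auto. rewrite IHn; auto. Qed.
Lemma Im_Cpartial f n : Im (Cpartial f n) = sum_f_R0 (fun k => Im (f k)) n.
Proof. induction n; simpl; auto. rewrite IHn; auto. Qed.

Lemma Cpartial_ext f g n : (forall k, (k <= n)%nat -> f k = g k) -> Cpartial f n = Cpartial g n.
Proof.
  induction n; intros H; simpl. apply H; lia.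
  rewrite IHn, H; auto; intros; apply H; lia.
Qed.
Lemma Cpartial_add f g n :
  Cpartial (fun k => Cadd (f k) (g k)) n = Cadd (Cpartial f n) (Cpartial g n).
Proof. induction n; simpl; auto. rewrite IHn. ring. Qed.
Lemma Cpartial_sub f g n :
  Cpartial (fun k => Csub (f k) (g k)) n = Csub (Cpartial f n) (Cpartial g n).
Proof. induction n; simpl; auto. rewrite IHn. ring. Qed.
Lemma Cpartial_cmul c f n : Cpartial (fun k => Cmul c (f k)) n = Cmul c (Cpartial f n).
Proof. induction n; simpl; auto. rewrite IHn. ring. Qed.
Lemma Cpartial_RtoC g n : Cpartial (fun k => RtoC (g k)) n = RtoC (sum_f_R0 g n).
Proof. induction n; simpl; auto. rewrite IHn, RtoC_add. auto. Qed.

Lemma cv_const c : Un_cv (fun _ : nat => c) c.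
Proof. intros eps Heps. exists 0%nat. intros. unfold Rdist. rewrite Rminus_diag, Rabs_R0. lra. Qed.

Lemma Csums_of_cv f L :
  Un_cv (fun n => Re (Cpartial f n)) (Re L) -> Un_cv (fun n => Im (Cpartial f n)) (Im L) ->
  Csums f L.
Proof.
  intros H1 H2 eps Heps.
  destruct (H1 (eps/2)) as [N1 HN1]; [lra|].
  destruct (H2 (eps/2)) as [N2 HN2]; [lra|].
  exists (max N1 N2). intros n Hn.
  specialize (HN1 n ltac:(lia)). specialize (HN2 n ltac:(lia)).
  unfold R_dist in *. unfold Cnorm, Csub, Cadd, Copp; simpl.
  set (x := Re (Cpartial f n) + - Re L) in *. set (y := Im (Cpartial f n) + - Im L) in *.
  replace (Re (Cpartial f n) - Re L) with x in HN1 by (unfold x; ring).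
  replace (Im (Cpartial f n) - Im L) with y in HN2 by (unfold y; ring).
  apply Rabs_def2 in HN1. apply Rabs_def2 in HN2.
  rewrite <- (sqrt_pow2 eps) by lra.
  apply sqrt_lt_1_alt. split; nra.
Qed.

Lemma cv_of_Csums f L : Csums f L ->
  Un_cv (fun n => Re (Cpartial f n)) (Re L) /\ Un_cv (fun n => Im (Cpartial f n)) (Im L).
Proof.
  intros H. split; intros eps Heps; destruct (H eps Heps) as [N HN]; exists N; intros n Hn;
  specialize (HN n Hn); unfold Cnorm, Csub, Cadd, Copp in HN; simpl in HN; unfold Rdist;
  eapply Rle_lt_trans; try exact HN; rewrite <- sqrt_Rsqr_abs; apply sqrt_le_1_alt;
  unfold Rsqr, Rminus.
  - pose proof (Rle_0_sqr (Im (Cpartial f n) + - Im L)); unfold Rsqr in *; nra.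
  - pose proof (Rle_0_sqr (Re (Cpartial f n) + - Re L)); unfold Rsqr in *; nra.
Qed.

Lemma Csums_ext f g L : (forall n, f n = g n) -> Csums g L -> Csums f L.
Proof.
  intros E H eps Heps. destruct (H eps Heps) as [N HN]. exists N. intros n Hn.
  rewrite (Cpartial_ext f g n) by auto. auto.
Qed.

Lemma Csums_add f g Lf Lg : Csums f Lf -> Csums g Lg ->
  Csums (fun n => Cadd (f n) (g n)) (Cadd Lf Lg).
Proof.
  intros Hf Hg. destruct (cv_of_Csums _ _ Hf) as [Hfr Hfi], (cv_of_Csums _ _ Hg) as [Hgr Hgi].
  apply Csums_of_cv; [eapply Un_cv_ext; [|exact (CV_plus _ _ _ _ Hfr Hgr)]
                     | eapply Un_cv_ext; [|exact (CV_plus _ _ _ _ Hfi Hgi)]];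
  intro n; rewrite Cpartial_add; reflexivity.
Qed.

Lemma Csums_sub f g Lf Lg : Csums f Lf -> Csums g Lg ->
  Csums (fun n => Csub (f n) (g n)) (Csub Lf Lg).
Proof.
  intros Hf Hg. destruct (cv_of_Csums _ _ Hf) as [Hfr Hfi], (cv_of_Csums _ _ Hg) as [Hgr Hgi].
  apply Csums_of_cv; [eapply Un_cv_ext; [|exact (CV_minus _ _ _ _ Hfr Hgr)]
                     | eapply Un_cv_ext; [|exact (CV_minus _ _ _ _ Hfi Hgi)]];
  intro n; rewrite Cpartial_sub; reflexivity.
Qed.

Lemma Csums_cmul k f L : Csums f L -> Csums (fun n => Cmul k (f n)) (Cmul k L).
Proof.
  intros Hf. destruct (cv_of_Csums _ _ Hf) as [Hr Hi].
  apply Csums_of_cv.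
  - eapply Un_cv_ext; [|apply CV_minus; apply CV_mult; eauto using cv_const].
    intro n. rewrite Cpartial_cmul. reflexivity.
  - eapply Un_cv_ext; [|apply CV_plus; apply CV_mult; eauto using cv_const].
    intro n. rewrite Cpartial_cmul. reflexivity.
Qed.

Lemma series_cv (a : nat -> R) : ex_series a -> Un_cv (fun n => sum_f_R0 a n) (Series a).
Proof. intros H. apply is_series_Reals, Series_correct, H. Qed.

Lemma sum_scal_l (c : R) f n : sum_f_R0 (fun k => c * f k) n = c * sum_f_R0 f n.
Proof. induction n; simpl; auto. rewrite IHn. ring. Qed.

Lemma telescope_ex : ex_series (fun n => / ((INR n + 1) * (INR n + 2))).
Proof.
  exists 1. apply is_series_Reals. intros eps Heps.
  destruct (exists_nat_gt (/ eps)) as [N HN].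
  exists N. intros n Hn.
  assert (E : forall n, sum_f_R0 (fun n => / ((INR n + 1) * (INR n + 2))) n = 1 - / (INR n + 2)).
  { induction n0.
    - simpl. field.
    - rewrite tech5, IHn0, S_INR. pose proof (pos_INR n0). field. lra. }
  rewrite E. unfold Rdist. replace (1 - / (INR n + 2) - 1) with (- / (INR n + 2)) by ring.
  pose proof (pos_INR n). rewrite Rabs_Ropp, Rabs_right by (left; apply Rinv_0_lt_compat; lra).
  apply le_INR in Hn.
  assert (0 < / eps) by (apply Rinv_0_lt_compat; lra).
  apply Rlt_le_trans with (/ (/ eps)).
  - apply Rinv_lt_contravar; nra.
  - rewrite Rinv_inv. lra.
Qed.

Lemma bounded_div_cv (f : nat -> R) B :
  (forall m, Rabs (f m) <= B) -> Un_cv (fun n => f (pred n) / INR n) 0.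
Proof.
  intros HB eps Heps.
  assert (HB0 : 0 <= B) by (specialize (HB 0%nat); pose proof (Rabs_pos (f 0%nat)); lra).
  destruct (exists_nat_gt (B / eps)) as [N HN].
  exists (S N). intros n Hn. unfold Rdist. rewrite Rminus_0_r.
  assert (Hn' : INR (S N) <= INR n) by (apply le_INR; lia).
  rewrite S_INR in Hn'.
  assert (Hpos : 0 < INR n) by (pose proof (pos_INR N); lra).
  rewrite Rabs_div, (Rabs_right (INR n)) by lra.
  apply (Rmult_lt_reg_r (INR n)); [lra|].
  unfold Rdiv. rewrite Rmult_assoc, Rinv_l, Rmult_1_r by lra.
  apply Rle_lt_trans with B; auto.
  apply (Rmult_lt_compat_r eps) in HN; auto.
  unfold Rdiv in HN. rewrite Rmult_assoc, Rinv_l, Rmult_1_r in HN by lra. nra.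
Qed.

(** * Derivatives of complex-valued functions of a real variable *)

Definition CDer (f : R -> Cplx) (t : R) (l : Cplx) :=
  derivable_pt_lim (fun s => Re (f s)) t (Re l) /\
  derivable_pt_lim (fun s => Im (f s)) t (Im l).

Lemma CDer_eq f t l l' : CDer f t l -> l = l' -> CDer f t l'.
Proof. intros H <-; auto. Qed.

Lemma CDer_add f g t l m :
  CDer f t l -> CDer g t m -> CDer (fun s => Cadd (f s) (g s)) t (Cadd l m).
Proof. intros [H1 H2] [H3 H4]; split; simpl; apply derivable_pt_lim_plus; auto. Qed.
Lemma CDer_sub f g t l m :
  CDer f t l -> CDer g t m -> CDer (fun s => Csub (f s) (g s)) t (Csub l m).
Proof. intros [H1 H2] [H3 H4]; split; simpl; apply derivable_pt_lim_plus; auto;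
  apply derivable_pt_lim_opp; auto. Qed.
Lemma CDer_cmul c f t l : CDer f t l -> CDer (fun s => Cmul c (f s)) t (Cmul c l).
Proof.
  intros [H1 H2]; destruct c as [cr ci]; split; simpl.
  - apply derivable_pt_lim_minus; apply derivable_pt_lim_scal; auto.
  - apply derivable_pt_lim_plus; apply derivable_pt_lim_scal; auto.
Qed.
Lemma CDer_RtoC g t l : derivable_pt_lim g t l -> CDer (fun s => RtoC (g s)) t (RtoC l).
Proof. intros H; split; simpl; auto. apply derivable_pt_lim_const. Qed.
Lemma CDer_Cpartial (F : nat -> R -> Cplx) (F' : nat -> Cplx) t n :
  (forall j, CDer (F j) t (F' j)) ->
  CDer (fun s => Cpartial (fun j => F j s) n) t (Cpartial F' n).
Proof. intros H; induction n; simpl. apply H. apply CDer_add; auto. Qed.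

Lemma CDer_Csin_lin w t :
  CDer (fun s => Csin (Cmul w (RtoC s))) t (Cmul w (Ccos (Cmul w (RtoC t)))).
Proof.
  destruct w as [p q]; split; simpl; apply is_derive_Reals; unfold Rcosh, Rsinh;
  auto_derive; auto; unfold Rminus; field.
Qed.

Lemma Csums_zero_of_cesaro_bounded f L B : Csums f L ->
  (forall m, Rabs (Re (Cpartial (Cpartial f) m)) <= B /\
             Rabs (Im (Cpartial (Cpartial f) m)) <= B) ->
  L = RtoC 0.
Proof.
  intros Hf HB. destruct (cv_of_Csums _ _ Hf) as [Hr Hi].
  apply Ceq; simpl.
  - apply (UL_sequence _ _ _ (Cesaro_1 _ _ Hr)), (bounded_div_cv _ B).
    intro m. rewrite <- Re_Cpartial. apply HB.
  - apply (UL_sequence _ _ _ (Cesaro_1 _ _ Hi)), (bounded_div_cv _ B).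
    intro m. rewrite <- Im_Cpartial. apply HB.
Qed.

(** * The partial-fraction expansion of the secant *)

Definition oddR (n : nat) : R := 2 * INR n + 1.

Definition sec_term (z : Cplx) (n : nat) : Cplx :=
  Cdiv (RtoC ((-1) ^ n * oddR n)) (Csub (Cmul (RtoC (oddR n)) (RtoC (oddR n))) (Cmul z z)).

Lemma oddR_INR n : INR (2 * n + 1) = oddR n.
Proof. unfold oddR. rewrite plus_INR, mult_INR. simpl. ring. Qed.
Lemma oddR_pos n : 0 < oddR n.
Proof. unfold oddR. pose proof (pos_INR n). lra. Qed.
Lemma RtoC_oddR_neq0 n : RtoC (oddR n) <> RtoC 0.
Proof. apply RtoC_neq. pose proof (oddR_pos n). lra. Qed.
Lemma RtoC_oddR n : RtoC (oddR n) = Cadd (Cmul C2 (RtoC (INR n))) (RtoC 1).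
Proof. unfold oddR. rewrite RtoC_add, RtoC_mul, RtoC_2. reflexivity. Qed.

Lemma not_odd_sub z n : not_odd_int z -> Csub (RtoC (oddR n)) z <> RtoC 0.
Proof.
  intros H E. destruct (H n) as [H1 _]. apply H1. rewrite oddR_INR.
  apply Ceq; injection E; simpl; lra.
Qed.
Lemma not_odd_add z n : not_odd_int z -> Cadd (RtoC (oddR n)) z <> RtoC 0.
Proof.
  intros H E. destruct (H n) as [_ H1]. apply H1. rewrite oddR_INR.
  apply Ceq; injection E; simpl; lra.
Qed.
Lemma not_odd_den z n :
  not_odd_int z -> Csub (Cmul (RtoC (oddR n)) (RtoC (oddR n))) (Cmul z z) <> RtoC 0.
Proof.
  intros H. replace (Csub (Cmul (RtoC (oddR n)) (RtoC (oddR n))) (Cmul z z))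
    with (Cmul (Csub (RtoC (oddR n)) z) (Cadd (RtoC (oddR n)) z)) by ring.
  apply Cmul_neq0; auto using not_odd_sub, not_odd_add.
Qed.

Lemma sec_term_0 n : sec_term (RtoC 0) n = RtoC ((-1) ^ n / oddR n).
Proof.
  unfold sec_term. pose proof (oddR_pos n). rewrite RtoC_div by lra. rewrite RtoC_mul.
  field. apply RtoC_oddR_neq0.
Qed.

Lemma sin_cos_oddR n : sin (oddR n * (PI / 2)) = (-1) ^ n /\ cos (oddR n * (PI / 2)) = 0.
Proof.
  induction n.
  - unfold oddR; simpl. replace ((2 * 0 + 1) * (PI / 2)) with (PI / 2) by ring.
    rewrite sin_PI2, cos_PI2. split; ring.
  - replace (oddR (S n) * (PI / 2)) with (oddR n * (PI / 2) + PI)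
      by (unfold oddR; rewrite S_INR; field).
    rewrite neg_sin, neg_cos. destruct IHn as [-> ->]. simpl. split; ring.
Qed.

Lemma Ccos_half_pi_neq0 z : not_odd_int z -> Ccos (Cmul z (RtoC (PI / 2))) <> RtoC 0.
Proof.
  intros Hz E. destruct z as [p q].
  assert (E1 := f_equal Re E). assert (E2 := f_equal Im E). simpl in E1, E2.
  replace (p * (PI / 2) - q * 0) with (p * (PI / 2)) in * by ring.
  replace (p * 0 + q * (PI / 2)) with (q * (PI / 2)) in * by ring.
  pose proof (Rcosh_pos (q * (PI / 2))). pose proof PI_RGT_0.
  assert (Hc : cos (p * (PI / 2)) = 0) by (apply Rmult_integral in E1 as [|]; lra).
  assert (Hs : sin (p * (PI / 2)) <> 0).
  { intro Hs. pose proof (sin2_cos2 (p * (PI / 2))) as H1.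
    rewrite Hs, Hc in H1. unfold Rsqr in H1. lra. }
  assert (Hq : q = 0).
  { assert (E3 : sin (p * (PI / 2)) * Rsinh (q * (PI / 2)) = 0) by lra.
    assert (Rsinh (q * (PI / 2)) = 0) as Hsh
      by (apply Rmult_integral in E3 as [|]; [contradiction | lra]).
    apply Rsinh_eq0, Rmult_integral in Hsh as [|]; lra. }
  subst q. apply cos_eq_0_0 in Hc as [k Hk].
  assert (Hp : p = 2 * IZR k + 1) by (apply (Rmult_eq_reg_r (PI / 2)); [rewrite Hk; field | lra]).
  destruct (Z_le_gt_dec 0 k) as [Hk0|Hk0].
  - destruct (Hz (Z.to_nat k)) as [H1 _]. apply H1. rewrite oddR_INR. unfold oddR.
    apply Ceq; cbn [Re Im RtoC]; auto.
    rewrite Hp, INR_IZR_INZ, Z2Nat.id by auto. ring.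
  - destruct (Hz (Z.to_nat (- k - 1))) as [_ H1]. apply H1. rewrite oddR_INR. unfold oddR.
    apply Ceq; cbn [Re Im RtoC]; auto.
    rewrite Hp, INR_IZR_INZ, Z2Nat.id, minus_IZR, opp_IZR by lia. ring.
Qed.

(* A primitive in s of (cos(z s) - 1) cos((2n+1) s): with u = 2n+1,
   G_n(s) = (sin((u-z)s)/(u-z) + sin((u+z)s)/(u+z))/2 - sin(u s)/u.
   At s = pi/2 it evaluates to cos(pi z/2) d_z(n) - d_0(n). *)
Definition sec_prim (z : Cplx) (n : nat) (s : R) : Cplx :=
  Csub (Cmul (RtoC (1/2))
         (Cadd (Cmul (Cinv (Csub (RtoC (oddR n)) z)) (Csin (Cmul (Csub (RtoC (oddR n)) z) (RtoC s))))
               (Cmul (Cinv (Cadd (RtoC (oddR n)) z)) (Csin (Cmul (Cadd (RtoC (oddR n)) z) (RtoC s))))))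
       (RtoC (sin (oddR n * s) / oddR n)).

Lemma lin_sub_split u z t :
  Cmul (Csub (RtoC u) z) (RtoC t) = Cadd (RtoC (u * t)) (Copp (Cmul z (RtoC t))).
Proof. rewrite RtoC_mul. ring. Qed.
Lemma lin_add_split u z t :
  Cmul (Cadd (RtoC u) z) (RtoC t) = Cadd (RtoC (u * t)) (Cmul z (RtoC t)).
Proof. rewrite RtoC_mul. ring. Qed.

Lemma sec_prim_der z n t : not_odd_int z ->
  CDer (sec_prim z n) t (Cmul (Csub (Ccos (Cmul z (RtoC t))) (RtoC 1)) (RtoC (cos (oddR n * t)))).
Proof.
  intros Hz. unfold sec_prim. eapply CDer_eq.
  - apply CDer_sub.
    + apply CDer_cmul, CDer_add; apply CDer_cmul, CDer_Csin_lin.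
    + apply CDer_RtoC, is_derive_Reals. pose proof (oddR_pos n). auto_derive; auto.
  - pose proof (not_odd_sub z n Hz). pose proof (not_odd_add z n Hz). pose proof (oddR_pos n).
    rewrite lin_sub_split, lin_add_split, !Ccos_add, Ccos_opp, Csin_opp, Ccos_RtoC, Csin_RtoC.
    replace (oddR n * 1 * cos (oddR n * t) * / oddR n) with (cos (oddR n * t)) by (field; lra).
    rewrite RtoC_half. pose proof C2_neq0. field. auto.
Qed.

Lemma sec_prim_0 z n : sec_prim z n 0 = RtoC 0.
Proof.
  unfold sec_prim. rewrite Rmult_0_r, sin_0.
  replace (Cmul (Csub (RtoC (oddR n)) z) (RtoC 0)) with (RtoC 0) by ring.
  replace (Cmul (Cadd (RtoC (oddR n)) z) (RtoC 0)) with (RtoC 0) by ring.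
  rewrite Csin_RtoC, sin_0. unfold Rdiv. rewrite Rmult_0_l. ring.
Qed.

Lemma sec_prim_half_pi z n : not_odd_int z ->
  sec_prim z n (PI / 2) =
  Csub (Cmul (Ccos (Cmul z (RtoC (PI / 2)))) (sec_term z n)) (sec_term (RtoC 0) n).
Proof.
  intros Hz. rewrite sec_term_0. unfold sec_prim, sec_term.
  pose proof (not_odd_sub z n Hz). pose proof (not_odd_add z n Hz). pose proof (oddR_pos n).
  rewrite lin_sub_split, lin_add_split, !Csin_add, Ccos_opp, Csin_opp, Ccos_RtoC, Csin_RtoC.
  destruct (sin_cos_oddR n) as [-> ->].
  rewrite !RtoC_div by lra. rewrite RtoC_mul, RtoC_2.
  pose proof C2_neq0. pose proof (RtoC_oddR_neq0 n).
  pose proof (not_odd_den z n Hz). field. repeat split; auto.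
Qed.

Definition sec_cesaro_prim (z : Cplx) (m : nat) (s : R) : Cplx :=
  Cpartial (fun k => Cpartial (fun j => sec_prim z j s) k) m.
Definition odd_kernel (m : nat) (t : R) : R :=
  sum_f_R0 (fun k => sum_f_R0 (fun j => cos (oddR j * t)) k) m.

Lemma sec_cesaro_prim_der z m t : not_odd_int z ->
  CDer (sec_cesaro_prim z m) t
       (Cmul (Csub (Ccos (Cmul z (RtoC t))) (RtoC 1)) (RtoC (odd_kernel m t))).
Proof.
  intros Hz. unfold sec_cesaro_prim. eapply CDer_eq.
  - apply (CDer_Cpartial (fun k s => Cpartial (fun j => sec_prim z j s) k)). intro k.
    apply (CDer_Cpartial (fun j s => sec_prim z j s)). intro j. apply sec_prim_der; auto.
  - unfold odd_kernel. rewrite <- Cpartial_RtoC, <- Cpartial_cmul.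
    apply Cpartial_ext. intros k _.
    rewrite <- Cpartial_RtoC, <- Cpartial_cmul. reflexivity.
Qed.

Definition sec_defect (z : Cplx) (j : nat) : Cplx :=
  Csub (Cmul (Ccos (Cmul z (RtoC (PI / 2)))) (sec_term z j)) (sec_term (RtoC 0) j).

Lemma sec_cesaro_prim_increment z m : not_odd_int z ->
  Csub (sec_cesaro_prim z m (PI / 2)) (sec_cesaro_prim z m 0) =
  Cpartial (Cpartial (sec_defect z)) m.
Proof.
  intros Hz. unfold sec_cesaro_prim. rewrite <- Cpartial_sub. apply Cpartial_ext. intros k _.
  rewrite <- Cpartial_sub. apply Cpartial_ext. intros j _.
  rewrite sec_prim_half_pi, sec_prim_0 by auto. unfold sec_defect. ring.
Qed.

(* Closed form of the kernel: 4 sin^2 t K_m(t) = cos t - cos((2m+3) t). *)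
Lemma odd_cos_sum t k :
  2 * sin t * sum_f_R0 (fun j => cos (oddR j * t)) k = sin (2 * (INR k + 1) * t).
Proof.
  induction k.
  - simpl. unfold oddR. simpl. replace (2 * (0 + 1) * t) with (2 * t) by ring.
    replace ((2 * 0 + 1) * t) with t by ring. rewrite sin_2a. ring.
  - simpl sum_f_R0. rewrite Rmult_plus_distr_l, IHk, S_INR. unfold oddR. rewrite S_INR.
    set (A := (2 * (INR k + 1) + 1) * t).
    replace (2 * (INR k + 1) * t) with (A - t) by (unfold A; ring).
    replace (2 * (INR k + 1 + 1) * t) with (A + t) by (unfold A; ring).
    rewrite sin_plus, sin_minus. ring.
Qed.

Lemma even_sin_sum t m :
  2 * sin t * sum_f_R0 (fun k => sin (2 * (INR k + 1) * t)) m = cos t - cos ((2 * INR m + 3) * t).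
Proof.
  induction m.
  - simpl. replace (2 * (0 + 1) * t) with (t + t) by ring.
    replace ((2 * 0 + 3) * t) with ((t + t) + t) by ring.
    rewrite cos_plus, sin_plus, cos_plus.
    pose proof (sin2_cos2 t) as H. unfold Rsqr in H.
    apply (f_equal (Rmult (cos t))) in H. lra.
  - rewrite tech5, Rmult_plus_distr_l, IHm, S_INR.
    set (B := 2 * (INR m + 1 + 1) * t).
    replace ((2 * INR m + 3) * t) with (B - t) by (unfold B; ring).
    replace ((2 * (INR m + 1) + 3) * t) with (B + t) by (unfold B; ring).
    rewrite cos_plus, cos_minus. ring.
Qed.

Lemma odd_kernel_bound m t : Rabs (sin t ^ 2 * odd_kernel m t) <= 1 / 2.
Proof.
  assert (E : 4 * (sin t ^ 2 * odd_kernel m t) = cos t - cos ((2 * INR m + 3) * t)).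
  { rewrite <- even_sin_sum, <- (sum_eq _ _ m (fun k _ => odd_cos_sum t k)), sum_scal_l.
    change (odd_kernel m t) with (sum_f_R0 (sum_f_R0 (fun j => cos (oddR j * t))) m).
    ring. }
  pose proof (COS_bound t). pose proof (COS_bound ((2 * INR m + 3) * t)).
  apply Rabs_le. lra.
Qed.

Lemma balanced_product_bound (w K c C : R) : 0 <= C ->
  Rabs w <= C * c ^ 2 -> c ^ 2 <= 9 * sin c ^ 2 -> Rabs (sin c ^ 2 * K) <= 1 / 2 ->
  Rabs (w * K) <= 9 * C / 2.
Proof.
  intros HC Hw Hc HK. rewrite Rabs_mult in *.
  rewrite (Rabs_right (sin c ^ 2)) in HK by nra.
  pose proof (Rabs_pos K).
  apply Rle_trans with (C * c ^ 2 * Rabs K); [apply Rmult_le_compat_r; auto|].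
  apply Rle_trans with (9 * C * (sin c ^ 2 * Rabs K)); [|nra].
  replace (9 * C * (sin c ^ 2 * Rabs K)) with (C * (9 * sin c ^ 2) * Rabs K) by ring.
  apply Rmult_le_compat_r; auto. apply Rmult_le_compat_l; auto.
Qed.

Lemma sec_cesaro_prim_der_bound z m c : Rabs c <= PI / 2 ->
  Rabs (Re (Cmul (Csub (Ccos (Cmul z (RtoC c))) (RtoC 1)) (RtoC (odd_kernel m c))))
    <= 9 * cos_quad_const z / 2 /\
  Rabs (Im (Cmul (Csub (Ccos (Cmul z (RtoC c))) (RtoC 1)) (RtoC (odd_kernel m c))))
    <= 9 * cos_quad_const z / 2.
Proof.
  intros Hc. pose proof PI_4.
  destruct (Ccos_sub1_bound z c ltac:(lra)) as [H1 H2].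
  pose proof (sqr_le_sin_sqr_abs c Hc). pose proof (odd_kernel_bound m c).
  pose proof (cos_quad_const_nonneg z).
  replace (Re (Cmul _ (RtoC (odd_kernel m c))))
    with (Re (Csub (Ccos (Cmul z (RtoC c))) (RtoC 1)) * odd_kernel m c) by (simpl; ring).
  replace (Im (Cmul _ (RtoC (odd_kernel m c))))
    with (Im (Csub (Ccos (Cmul z (RtoC c))) (RtoC 1)) * odd_kernel m c) by (simpl; ring).
  split; eapply balanced_product_bound; eauto.
Qed.

Lemma sec_defect_cesaro_bound z m : not_odd_int z ->
  Rabs (Re (Cpartial (Cpartial (sec_defect z)) m)) <= 9 * cos_quad_const z / 2 * (PI / 2) /\
  Rabs (Im (Cpartial (Cpartial (sec_defect z)) m)) <= 9 * cos_quad_const z / 2 * (PI / 2).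
Proof.
  intros Hz. rewrite <- sec_cesaro_prim_increment by auto. pose proof PI_RGT_0.
  assert (Hp : Rabs (PI / 2) = PI / 2) by (apply Rabs_right; lra).
  set (B := 9 * cos_quad_const z / 2).
  pose (D c := Cmul (Csub (Ccos (Cmul z (RtoC c))) (RtoC 1)) (RtoC (odd_kernel m c))).
  assert (Hd : forall c, Rabs c <= Rabs (PI / 2) -> Rabs (Re (D c)) <= B /\ Rabs (Im (D c)) <= B)
    by (intros c Hc; rewrite Hp in Hc; exact (sec_cesaro_prim_der_bound z m c Hc)).
  split.
  - pose proof (mvt_bound (fun s => Re (sec_cesaro_prim z m s)) (fun c => Re (D c)) (PI / 2) B
      (fun c => proj1 (sec_cesaro_prim_der z m c Hz)) (fun c Hc => proj1 (Hd c Hc))) as H1.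
    rewrite Hp in H1. exact H1.
  - pose proof (mvt_bound (fun s => Im (sec_cesaro_prim z m s)) (fun c => Im (D c)) (PI / 2) B
      (fun c => proj2 (sec_cesaro_prim_der z m c Hz)) (fun c Hc => proj2 (Hd c Hc))) as H1.
    rewrite Hp in H1. exact H1.
Qed.

(* Convergence: d_z(n) = d_0(n) + r_z(n) with r_z(n) = O(n^-3), and the
   d_0(n) = (-1)^n/(2n+1) form the Leibniz series for pi/4. *)
Definition sec_rem (z : Cplx) (n : nat) : Cplx :=
  Cmul (RtoC ((-1) ^ n / oddR n))
       (Cdiv (Cmul z z) (Csub (Cmul (RtoC (oddR n)) (RtoC (oddR n))) (Cmul z z))).

Lemma sec_term_split z n : not_odd_int z ->
  sec_term z n = Cadd (sec_term (RtoC 0) n) (sec_rem z n).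
Proof.
  intros Hz. rewrite sec_term_0. unfold sec_term, sec_rem.
  pose proof (not_odd_den z n Hz). pose proof (oddR_pos n). pose proof (RtoC_oddR_neq0 n).
  rewrite !RtoC_div, RtoC_mul by lra. field. auto.
Qed.

(* Leibniz: sum (-1)^n/(2n+1) = pi/4, from the Stdlib's construction of PI. *)
Lemma leibniz_pi : Csums (sec_term (RtoC 0)) (RtoC (PI / 4)).
Proof.
  pose proof Alt_PI_eq as H. unfold Alt_PI in H. destruct exist_PI as [l Hl].
  apply Csums_of_cv; simpl.
  - replace (PI / 4) with l by lra. eapply Un_cv_ext; [|exact Hl].
    intro n. rewrite Re_Cpartial. apply sum_eq. intros k _.
    rewrite sec_term_0. simpl. unfold tg_alt, PI_tg. rewrite oddR_INR. reflexivity.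
  - refine (Un_cv_ext (fun _ => 0) _ _ 0 (cv_const 0)).
    intro n. induction n as [|n IHn]; cbn [Cpartial]; rewrite sec_term_0; [reflexivity|].
    simpl. rewrite <- IHn. ring.
Qed.

Lemma frac_bound (x a b Dr Di s : R) :
  0 < s -> s <= Rabs Dr -> 0 <= a -> 0 <= b ->
  Rabs x <= a * Rabs Dr + b * Rabs Di ->
  Rabs (x / (Dr * Dr + Di * Di)) <= (a + b) / s.
Proof.
  intros Hs HA Ha Hb Hx.
  set (A := Rabs Dr) in *. set (B := Rabs Di) in *.
  assert (HB : 0 <= B) by apply Rabs_pos.
  assert (HN : Dr * Dr + Di * Di = A * A + B * B) by (unfold A, B; rewrite !Rabs_sqr; ring).
  rewrite HN. assert (0 < A * A + B * B) by nra.
  rewrite Rabs_div, (Rabs_right (A * A + B * B)) by lra.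
  apply Rle_trans with ((a * A + b * B) / (A * A + B * B)).
  - apply Rmult_le_compat_r; [left; apply Rinv_0_lt_compat; lra | exact Hx].
  - apply (Rmult_le_reg_r (A * A + B * B)); [lra|].
    unfold Rdiv. rewrite Rmult_assoc, Rinv_l, Rmult_1_r by lra.
    apply (Rmult_le_reg_r s); [lra|].
    replace ((a + b) * / s * (A * A + B * B) * s) with ((a + b) * (A * A + B * B)) by (field; lra).
    assert (A * s <= A * A + B * B) by nra.
    assert (B * s <= A * A + B * B) by (assert (B * s <= B * A) by (apply Rmult_le_compat_l; lra); nra).
    assert (a * A * s <= a * (A * A + B * B)) by (rewrite Rmult_assoc; apply Rmult_le_compat_l; lra).
    assert (b * B * s <= b * (A * A + B * B)) by (rewrite Rmult_assoc; apply Rmult_le_compat_l; lra).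
    nra.
Qed.

Definition Cabs1 (w : Cplx) : R := Rabs (Re w) + Rabs (Im w).

Lemma Cabs1_nonneg w : 0 <= Cabs1 w.
Proof. unfold Cabs1. pose proof (Rabs_pos (Re w)). pose proof (Rabs_pos (Im w)). lra. Qed.

Lemma shifted_quot_bound (w : Cplx) (U : R) : 2 * Cabs1 w <= U -> 0 < U ->
  Rabs (Re (Cdiv w (Csub (RtoC U) w))) <= 2 * Cabs1 w / U /\
  Rabs (Im (Cdiv w (Csub (RtoC U) w))) <= 2 * Cabs1 w / U.
Proof.
  intros HU HU0. destruct w as [p q]. unfold Cabs1 in *; cbn [Re Im] in *.
  pose proof (Rabs_pos p). pose proof (Rabs_pos q). pose proof (Rle_abs p).
  assert (Hs : U / 2 <= Rabs (U + - p)) by (rewrite Rabs_right; lra).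
  replace (2 * (Rabs p + Rabs q) / U) with ((Rabs p + Rabs q) / (U / 2)) by (field; lra).
  unfold Cdiv, Cmul, Cinv, Csub, Cadd, Copp, RtoC; cbn [Re Im].
  replace (0 + - q) with (- q) by ring.
  replace ((U + - p) ^ 2 + (- q) ^ 2) with ((U + - p) * (U + - p) + (- q) * (- q)) by ring.
  set (N := (U + - p) * (U + - p) + (- q) * (- q)).
  split.
  - replace (p * ((U + - p) / N) - q * (- - q / N))
      with ((p * (U + - p) + (- q) * (- q) * (-1)) / N) by (unfold Rdiv; ring).
    apply frac_bound; try lra.
    eapply Rle_trans; [apply Rabs_triang|]. rewrite !Rabs_mult, Rabs_Ropp, Rabs_m1. lra.
  - replace (p * (- - q / N) + q * ((U + - p) / N))
      with ((q * (U + - p) + p * (- q) * (-1)) / N) by (unfold Rdiv; ring).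
    rewrite (Rplus_comm (Rabs p)). apply frac_bound; try lra.
    eapply Rle_trans; [apply Rabs_triang|]. rewrite !Rabs_mult, Rabs_Ropp, Rabs_m1. lra.
Qed.

Lemma sec_rem_bound z n : 2 * Cabs1 (Cmul z z) <= oddR n ->
  Rabs (Re (sec_rem z n)) <= 2 * Cabs1 (Cmul z z) / oddR n ^ 3 /\
  Rabs (Im (sec_rem z n)) <= 2 * Cabs1 (Cmul z z) / oddR n ^ 3.
Proof.
  intros Hn. pose proof (oddR_pos n). pose proof (Cabs1_nonneg (Cmul z z)).
  assert (Hu1 : 1 <= oddR n) by (unfold oddR; pose proof (pos_INR n); lra).
  unfold sec_rem. rewrite <- RtoC_mul.
  destruct (shifted_quot_bound (Cmul z z) (oddR n * oddR n)) as [HR HI]; [nra | nra |].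
  set (Q := Cdiv (Cmul z z) (Csub (RtoC (oddR n * oddR n)) (Cmul z z))) in *.
  assert (Hr : Rabs ((-1) ^ n / oddR n) = / oddR n).
  { unfold Rdiv. rewrite Rabs_mult, pow_1_abs, Rmult_1_l.
    apply Rabs_right. left; apply Rinv_0_lt_compat; lra. }
  replace (2 * Cabs1 (Cmul z z) / oddR n ^ 3)
    with (/ oddR n * (2 * Cabs1 (Cmul z z) / (oddR n * oddR n))) by (field; lra).
  assert (0 < / oddR n) by (apply Rinv_0_lt_compat; lra).
  replace (Re (Cmul (RtoC ((-1) ^ n / oddR n)) Q)) with ((-1) ^ n / oddR n * Re Q) by (simpl; ring).
  replace (Im (Cmul (RtoC ((-1) ^ n / oddR n)) Q)) with ((-1) ^ n / oddR n * Im Q) by (simpl; ring).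
  rewrite !Rabs_mult, Hr. split; apply Rmult_le_compat_l; lra.
Qed.

Lemma inv_oddR_cube_le N k : / oddR (N + k) ^ 3 <= 2 * / ((INR k + 1) * (INR k + 2)).
Proof.
  pose proof (pos_INR k). pose proof (pos_INR N).
  assert (Hu : oddR k <= oddR (N + k)) by (unfold oddR; rewrite plus_INR; lra).
  pose proof (oddR_pos k).
  assert (H3 : (INR k + 1) * (INR k + 2) <= 2 * oddR k ^ 3) by (unfold oddR; nra).
  assert (H4 : oddR k ^ 3 <= oddR (N + k) ^ 3) by (apply pow_incr; lra).
  assert (0 < oddR (N + k) ^ 3) by (apply pow_lt; lra).
  rewrite <- Rinv_inv with (r := 2), <- Rinv_mult.
  apply Rinv_le_contravar; [apply Rmult_lt_0_compat; nra | lra].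
Qed.

Lemma sec_rem_summable z :
  ex_series (fun n => Re (sec_rem z n)) /\ ex_series (fun n => Im (sec_rem z n)).
Proof.
  pose proof (Cabs1_nonneg (Cmul z z)). set (C := Cabs1 (Cmul z z)) in *.
  destruct (exists_nat_gt (2 * C)) as [N HN].
  assert (Hb : ex_series (fun k => 4 * C * / ((INR k + 1) * (INR k + 2))))
    by exact (ex_series_scal_l (4 * C) _ telescope_ex).
  assert (Hk : forall k, 2 * C / oddR (N + k) ^ 3 <= 4 * C * / ((INR k + 1) * (INR k + 2))).
  { intro k. pose proof (inv_oddR_cube_le N k).
    apply Rle_trans with (2 * C * (2 * / ((INR k + 1) * (INR k + 2)))); [|right; ring].
    unfold Rdiv. apply Rmult_le_compat_l; lra. }
  assert (Hcond : forall k, 2 * C <= oddR (N + k)).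
  { intro k. unfold oddR. rewrite plus_INR. pose proof (pos_INR k). pose proof (pos_INR N). lra. }
  split; apply (ex_series_incr_n _ N); refine (ex_series_le _ _ _ Hb); intro k;
    change (norm ?x) with (Rabs x); eapply Rle_trans; [|apply Hk| |apply Hk];
    apply (sec_rem_bound z (N + k) (Hcond k)).
Qed.

Lemma sec_series_converges z : not_odd_int z -> exists L, Csums (sec_term z) L.
Proof.
  intros Hz. destruct (sec_rem_summable z) as [Hr Hi].
  exists (Cadd (RtoC (PI / 4)) (mkC (Series (fun n => Re (sec_rem z n)))
                                    (Series (fun n => Im (sec_rem z n))))).
  apply (Csums_ext _ (fun n => Cadd (sec_term (RtoC 0) n) (sec_rem z n))).
  - intro n. apply sec_term_split, Hz.
  - apply Csums_add; [exact leibniz_pi|].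
    apply Csums_of_cv; simpl.
    + eapply Un_cv_ext; [|exact (series_cv _ Hr)]. intro n. rewrite Re_Cpartial. reflexivity.
    + eapply Un_cv_ext; [|exact (series_cv _ Hi)]. intro n. rewrite Im_Cpartial. reflexivity.
Qed.

(* The sum L of the secant series satisfies cos(pi z/2) L = pi/4: the defect
   series sums to cos(pi z/2) L - pi/4 and has bounded Cesaro sums. *)
Theorem sec_partial_fractions z : not_odd_int z ->
  Csums (sec_term z) (Cdiv (RtoC (PI / 4)) (Ccos (Cmul z (RtoC (PI / 2))))).
Proof.
  intros Hz. destruct (sec_series_converges z Hz) as [L HL].
  set (cz := Ccos (Cmul z (RtoC (PI / 2)))).
  assert (Hdef : Csums (sec_defect z) (Csub (Cmul cz L) (RtoC (PI / 4))))
    by exact (Csums_sub _ _ _ _ (Csums_cmul cz _ _ HL) leibniz_pi).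
  pose proof (Csums_zero_of_cesaro_bounded _ _ _ Hdef
                (fun m => sec_defect_cesaro_bound z m Hz)) as HcL.
  apply Csub_eq0 in HcL.
  replace (Cdiv (RtoC (PI / 4)) cz) with L; [exact HL|].
  rewrite <- HcL. field. exact (Ccos_half_pi_neq0 z Hz).
Qed.

(** * The terms of the 6F5 series *)

Lemma poch_shift t n : Cmul (poch t n) (Cadd t (RtoC (INR n))) = Cmul t (poch (Cadd (RtoC 1) t) n).
Proof.
  induction n as [|n IHn]; [apply Ceq; simpl; ring|].
  cbn [poch]. rewrite S_INR, RtoC_add.
  transitivity (Cmul (Cmul (poch t n) (Cadd t (RtoC (INR n)))) (Cadd (Cadd t (RtoC (INR n))) (RtoC 1)));
    [ring | rewrite IHn; ring].
Qed.

Lemma poch_neq0 t n :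
  (forall k, (k < n)%nat -> Cadd t (RtoC (INR k)) <> RtoC 0) -> poch t n <> RtoC 0.
Proof.
  induction n; intros H; simpl.
  - apply RtoC_neq. lra.
  - apply Cmul_neq0; [apply IHn; intros; apply H|apply H]; lia.
Qed.

Lemma not_nonpos_poch_neq0 t n : not_nonpos_int t -> poch t n <> RtoC 0.
Proof.
  intros H. apply poch_neq0. intros k _ E. apply (H k). rewrite RtoC_opp.
  replace t with (Csub (Cadd t (RtoC (INR k))) (RtoC (INR k))) by ring. rewrite E. ring.
Qed.

(* (t)_n / (1+t)_n = t / (t+n): the source of the partial fractions. *)
Lemma poch_ratio t n : Cadd t (RtoC (INR n)) <> RtoC 0 ->
  poch t n = Cmul (Cdiv t (Cadd t (RtoC (INR n)))) (poch (Cadd (RtoC 1) t) n).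
Proof.
  intros H.
  transitivity (Cdiv (Cmul (poch t n) (Cadd t (RtoC (INR n)))) (Cadd t (RtoC (INR n)))).
  - field. exact H.
  - rewrite poch_shift. field. exact H.
Qed.

Lemma poch_one n : poch (RtoC 1) n = RtoC (INR (fact n)).
Proof.
  induction n as [|n IHn]; [reflexivity|].
  cbn [poch]. rewrite IHn, fact_simpl, mult_INR, S_INR, RtoC_mul, RtoC_add. ring.
Qed.

Lemma poch_three_half n :
  poch (RtoC (3 / 2)) n = Cmul (RtoC (oddR n)) (poch (RtoC (1 / 2)) n).
Proof.
  pose proof (poch_shift (RtoC (1 / 2)) n) as H.
  replace (Cadd (RtoC 1) (RtoC (1 / 2))) with (RtoC (3 / 2)) in H
    by (rewrite <- RtoC_add; f_equal; lra).
  rewrite RtoC_oddR. rewrite RtoC_half in *. pose proof C2_neq0.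
  transitivity (Cmul C2 (Cmul (Cdiv (RtoC 1) C2) (poch (RtoC (3 / 2)) n))); [field; auto|].
  rewrite <- H. field. auto.
Qed.

Lemma wp_term (t1 t2 t3 t4 : Cplx) n :
  not_nonpos_int (Cadd (RtoC 1) t1) -> not_nonpos_int (Cadd (RtoC 1) t2) ->
  not_nonpos_int (Cadd (RtoC 1) t3) -> not_nonpos_int (Cadd (RtoC 1) t4) ->
  Cadd t1 (RtoC (INR n)) <> RtoC 0 -> Cadd t2 (RtoC (INR n)) <> RtoC 0 ->
  Cadd t3 (RtoC (INR n)) <> RtoC 0 -> Cadd t4 (RtoC (INR n)) <> RtoC 0 ->
  hyp_term (RtoC 1 :: RtoC (3 / 2) :: t1 :: t2 :: t3 :: t4 :: nil)
    (RtoC (1 / 2) :: Cadd (RtoC 1) t1 :: Cadd (RtoC 1) t2 :: Cadd (RtoC 1) t3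
       :: Cadd (RtoC 1) t4 :: nil)
    (RtoC (-1)) n =
  Cmul (RtoC ((-1) ^ n * oddR n))
    (Cmul (Cmul (Cdiv t1 (Cadd t1 (RtoC (INR n)))) (Cdiv t2 (Cadd t2 (RtoC (INR n)))))
          (Cmul (Cdiv t3 (Cadd t3 (RtoC (INR n)))) (Cdiv t4 (Cadd t4 (RtoC (INR n)))))).
Proof.
  intros H1 H2 H3 H4 E1 E2 E3 E4.
  assert (Hhalf : poch (RtoC (1 / 2)) n <> RtoC 0).
  { apply poch_neq0. intros k _. rewrite <- RtoC_add. apply RtoC_neq.
    pose proof (pos_INR k). lra. }
  assert (Hfact : RtoC (INR (fact n)) <> RtoC 0) by (apply RtoC_neq, INR_fact_neq_0).
  pose proof (not_nonpos_poch_neq0 _ n H1). pose proof (not_nonpos_poch_neq0 _ n H2).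
  pose proof (not_nonpos_poch_neq0 _ n H3). pose proof (not_nonpos_poch_neq0 _ n H4).
  unfold hyp_term. cbn [map Cprod fold_right].
  rewrite poch_one, poch_three_half, RtoC_pow, RtoC_mul.
  rewrite (poch_ratio t1), (poch_ratio t2), (poch_ratio t3), (poch_ratio t4) by assumption.
  field. repeat split; assumption.
Qed.

Lemma half_sub_shift X n :
  Cadd (Cdiv (Csub (RtoC 1) X) C2) (RtoC (INR n)) = Cdiv (Csub (RtoC (oddR n)) X) C2.
Proof. pose proof C2_neq0. rewrite RtoC_oddR. field. auto. Qed.
Lemma half_add_shift X n :
  Cadd (Cdiv (Cadd (RtoC 1) X) C2) (RtoC (INR n)) = Cdiv (Cadd (RtoC (oddR n)) X) C2.
Proof. pose proof C2_neq0. rewrite RtoC_oddR. field. auto. Qed.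

Lemma wp_pair_ratio X n :
  Csub (RtoC (oddR n)) X <> RtoC 0 -> Cadd (RtoC (oddR n)) X <> RtoC 0 ->
  Cmul (Cdiv (Cdiv (Csub (RtoC 1) X) C2) (Cadd (Cdiv (Csub (RtoC 1) X) C2) (RtoC (INR n))))
       (Cdiv (Cdiv (Cadd (RtoC 1) X) C2) (Cadd (Cdiv (Cadd (RtoC 1) X) C2) (RtoC (INR n)))) =
  Cdiv (Csub (RtoC 1) (Cmul X X))
       (Csub (Cmul (RtoC (oddR n)) (RtoC (oddR n))) (Cmul X X)).
Proof.
  intros Hm Hp. pose proof C2_neq0. rewrite half_sub_shift, half_add_shift.
  replace (Csub (Cmul (RtoC (oddR n)) (RtoC (oddR n))) (Cmul X X))
    with (Cmul (Csub (RtoC (oddR n)) X) (Cadd (RtoC (oddR n)) X)) by ring.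
  field. auto.
Qed.

Definition wp_const (X Y : Cplx) : Cplx :=
  Cdiv (Cmul (Csub (RtoC 1) (Cmul X X)) (Csub (RtoC 1) (Cmul Y Y))) (Csub (Cmul X X) (Cmul Y Y)).

Lemma wp_partial_fraction X Y n :
  not_odd_int X -> not_odd_int Y -> Csub (Cmul X X) (Cmul Y Y) <> RtoC 0 ->
  Cmul (RtoC ((-1) ^ n * oddR n))
    (Cmul (Cdiv (Csub (RtoC 1) (Cmul X X)) (Csub (Cmul (RtoC (oddR n)) (RtoC (oddR n))) (Cmul X X)))
          (Cdiv (Csub (RtoC 1) (Cmul Y Y)) (Csub (Cmul (RtoC (oddR n)) (RtoC (oddR n))) (Cmul Y Y)))) =
  Cmul (wp_const X Y) (Csub (sec_term X n) (sec_term Y n)).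
Proof.
  intros HX HY HXY. pose proof (not_odd_den X n HX). pose proof (not_odd_den Y n HY).
  unfold wp_const, sec_term. field. repeat split; assumption.
Qed.

Lemma wp_term_split X Y n :
  not_odd_int X -> not_odd_int Y -> Csub (Cmul X X) (Cmul Y Y) <> RtoC 0 ->
  let t1 := Cdiv (Csub (RtoC 1) X) C2 in let t2 := Cdiv (Csub (RtoC 1) Y) C2 in
  let t3 := Cdiv (Cadd (RtoC 1) X) C2 in let t4 := Cdiv (Cadd (RtoC 1) Y) C2 in
  not_nonpos_int (Cadd (RtoC 1) t1) -> not_nonpos_int (Cadd (RtoC 1) t2) ->
  not_nonpos_int (Cadd (RtoC 1) t3) -> not_nonpos_int (Cadd (RtoC 1) t4) ->
  hyp_term (RtoC 1 :: RtoC (3 / 2) :: t1 :: t2 :: t3 :: t4 :: nil)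
    (RtoC (1 / 2) :: Cadd (RtoC 1) t1 :: Cadd (RtoC 1) t2 :: Cadd (RtoC 1) t3
       :: Cadd (RtoC 1) t4 :: nil)
    (RtoC (-1)) n =
  Cmul (wp_const X Y) (Csub (sec_term X n) (sec_term Y n)).
Proof.
  intros HX HY HXY t1 t2 t3 t4 H1 H2 H3 H4. pose proof C2_neq0.
  pose proof (not_odd_sub X n HX). pose proof (not_odd_add X n HX).
  pose proof (not_odd_sub Y n HY). pose proof (not_odd_add Y n HY).
  rewrite wp_term by (auto; unfold t1, t2, t3, t4;
    rewrite ?half_sub_shift, ?half_add_shift; apply Cdiv_neq0; auto).
  rewrite <- wp_partial_fraction by auto. unfold t1, t2, t3, t4.
  rewrite <- (wp_pair_ratio X n), <- (wp_pair_ratio Y n) by auto. f_equal. ring.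
Qed.

(** * Evaluation of the sum *)

Lemma sec_sub_sec p al ga :
  Ccos (Cadd al ga) <> RtoC 0 -> Ccos (Cadd al (Copp ga)) <> RtoC 0 ->
  Csub (Cdiv p (Ccos (Cadd al ga))) (Cdiv p (Ccos (Cadd al (Copp ga)))) =
  Cmul (Cmul C2 (Cmul C2 p))
       (Cdiv (Cmul (Csin al) (Csin ga)) (Cadd (Ccos (Cadd ga ga)) (Ccos (Cadd al al)))).
Proof.
  intros H1 H2. pose proof C2_neq0.
  rewrite Ccos_add_Ccos_double, Csin_mul_Csin. field. repeat split; auto.
Qed.

Lemma wp_value (a b c : Cplx) : a <> RtoC 0 -> b <> RtoC 0 -> c <> RtoC 0 ->
  not_odd_int (Cdiv (Cadd a c) b) -> not_odd_int (Cdiv (Csub a c) b) ->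
  let X := Cdiv (Cadd a c) b in let Y := Cdiv (Csub a c) b in
  let piC := RtoC PI in
  let Q := Cmul (Cmul (Cmul (Csub (Csub b a) c) (Cadd (Cadd b a) c))
                      (Cadd (Csub b a) c)) (Csub (Cadd b a) c) in
  Cmul (wp_const X Y)
    (Csub (Cdiv (RtoC (PI / 4)) (Ccos (Cmul X (RtoC (PI / 2)))))
          (Cdiv (RtoC (PI / 4)) (Ccos (Cmul Y (RtoC (PI / 2)))))) =
  Cmul (Cdiv (Cmul piC Q) (Cmul (Cmul (Cmul (RtoC 4) a) c) (Cpow b 2)))
       (Cdiv (Cmul (Csin (Cdiv (Cmul a piC) (Cmul (RtoC 2) b)))
                   (Csin (Cdiv (Cmul c piC) (Cmul (RtoC 2) b))))
             (Cadd (Ccos (Cdiv (Cmul c piC) b)) (Ccos (Cdiv (Cmul a piC) b)))).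
Proof.
  intros Ha Hb Hc HX HY X Y piC Q.
  pose proof (Ccos_half_pi_neq0 X HX) as HcX. pose proof (Ccos_half_pi_neq0 Y HY) as HcY.
  pose proof C2_neq0 as H2.
  assert (H4 : Cmul C2 C2 <> RtoC 0) by (apply Cmul_neq0; exact H2).
  assert (EK : wp_const X Y = Cdiv Q (Cmul (Cmul (Cmul C2 C2) (Cmul a c)) (Cmul b b))).
  { assert (Csub (Cmul (Cadd a c) (Cadd a c)) (Cmul (Csub a c) (Csub a c)) <> RtoC 0).
    { replace (Csub (Cmul (Cadd a c) (Cadd a c)) (Cmul (Csub a c) (Csub a c)))
        with (Cmul (Cmul C2 C2) (Cmul a c)) by ring.
      repeat apply Cmul_neq0; auto. }
    unfold wp_const, X, Y, Q. field. repeat split; auto. }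
  rewrite (RtoC_div PI 4), (RtoC_div PI 2), !RtoC_2 by lra.
  replace (RtoC 4) with (Cmul C2 C2) by (rewrite <- RtoC_2, <- RtoC_mul; f_equal; lra).
  set (al := Cdiv (Cmul a piC) (Cmul C2 b)) in *.
  set (ga := Cdiv (Cmul c piC) (Cmul C2 b)) in *.
  assert (EX : Cmul X (Cdiv (RtoC PI) C2) = Cadd al ga) by (unfold X, al, ga, piC; field; auto).
  assert (EY : Cmul Y (Cdiv (RtoC PI) C2) = Cadd al (Copp ga)) by (unfold Y, al, ga, piC; field; auto).
  assert (Ea : Cdiv (Cmul a piC) b = Cadd al al) by (unfold al; field; auto).
  assert (Ec : Cdiv (Cmul c piC) b = Cadd ga ga) by (unfold ga; field; auto).
  rewrite (RtoC_div PI 2), RtoC_2 in HcX, HcY by lra. rewrite EX in HcX. rewrite EY in HcY.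
  rewrite EK, EX, EY, sec_sub_sec, Ea, Ec by auto.
  assert (HD : Cadd (Ccos (Cadd ga ga)) (Ccos (Cadd al al)) <> RtoC 0)
    by (rewrite Ccos_add_Ccos_double; repeat apply Cmul_neq0; auto).
  unfold piC. simpl Cpow. field. repeat split; auto.
Qed.

Lemma half_sub_ratio w b : b <> RtoC 0 ->
  Csub (RtoC (1 / 2)) (Cdiv w (Cmul (RtoC 2) b)) = Cdiv (Csub (RtoC 1) (Cdiv w b)) C2.
Proof. intros Hb. pose proof C2_neq0. rewrite RtoC_half, RtoC_2. field. auto. Qed.
Lemma half_add_ratio w b : b <> RtoC 0 ->
  Cadd (RtoC (1 / 2)) (Cdiv w (Cmul (RtoC 2) b)) = Cdiv (Cadd (RtoC 1) (Cdiv w b)) C2.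
Proof. intros Hb. pose proof C2_neq0. rewrite RtoC_half, RtoC_2. field. auto. Qed.

Lemma sq_sub_sq_neq0 a b c : a <> RtoC 0 -> b <> RtoC 0 -> c <> RtoC 0 ->
  Csub (Cmul (Cdiv (Cadd a c) b) (Cdiv (Cadd a c) b)) (Cmul (Cdiv (Csub a c) b) (Cdiv (Csub a c) b))
  <> RtoC 0.
Proof.
  intros Ha Hb Hc. pose proof C2_neq0.
  replace (Csub _ _) with (Cdiv (Cmul (Cmul C2 C2) (Cmul a c)) (Cmul b b)) by (field; auto).
  apply Cdiv_neq0; repeat apply Cmul_neq0; auto.
Qed.

Theorem mainTheorem3 (a b c : Cplx)
  (ha : a <> RtoC 0) (hc : c <> RtoC 0)
  (hb : Re b > 0)
  (h1 : Re (Cadd (Cadd b a) c) > 0)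
  (h2 : Re (Csub (Cadd b a) c) > 0)
  (h3 : Re (Cadd (Csub b a) c) > 0)
  (h4 : Re (Csub (Csub b a) c) > 0)
  (hodd1 : not_odd_int (Cdiv (Cadd a c) b))
  (hodd2 : not_odd_int (Cdiv (Csub a c) b)) :
  let half := RtoC (1 / 2) in
  let t1 := Csub half (Cdiv (Cadd a c) (Cmul (RtoC 2) b)) in
  let t2 := Csub half (Cdiv (Csub a c) (Cmul (RtoC 2) b)) in
  let t3 := Cadd half (Cdiv (Cadd a c) (Cmul (RtoC 2) b)) in
  let t4 := Cadd half (Cdiv (Csub a c) (Cmul (RtoC 2) b)) in
  not_nonpos_int (Cadd (RtoC 1) t1) ->
  not_nonpos_int (Cadd (RtoC 1) t2) ->
  not_nonpos_int (Cadd (RtoC 1) t3) ->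
  not_nonpos_int (Cadd (RtoC 1) t4) ->
  let Q := Cmul (Cmul (Cmul (Csub (Csub b a) c) (Cadd (Cadd b a) c))
                      (Cadd (Csub b a) c)) (Csub (Cadd b a) c) in
  let piC := RtoC PI in
  pFq_eq
    (RtoC 1 :: RtoC (3 / 2) :: t1 :: t2 :: t3 :: t4 :: nil)
    (half :: Cadd (RtoC 1) t1 :: Cadd (RtoC 1) t2 :: Cadd (RtoC 1) t3
          :: Cadd (RtoC 1) t4 :: nil)
    (RtoC (-1))
    (Cmul (Cdiv (Cmul piC Q) (Cmul (Cmul (Cmul (RtoC 4) a) c) (Cpow b 2)))
          (Cdiv (Cmul (Csin (Cdiv (Cmul a piC) (Cmul (RtoC 2) b)))
                      (Csin (Cdiv (Cmul c piC) (Cmul (RtoC 2) b))))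
                (Cadd (Ccos (Cdiv (Cmul c piC) b)) (Ccos (Cdiv (Cmul a piC) b))))).
Proof.
  intros half t1 t2 t3 t4 Hn1 Hn2 Hn3 Hn4 Q piC.
  assert (Hb : b <> RtoC 0) by (intro E; rewrite E in hb; simpl in hb; lra).
  unfold pFq_eq, Q, piC. rewrite <- wp_value by assumption.
  subst half t1 t2 t3 t4.
  rewrite !half_sub_ratio, !half_add_ratio in * by exact Hb.
  apply (Csums_ext _ _ _
    (fun n => wp_term_split _ _ n hodd1 hodd2 (sq_sub_sq_neq0 a b c ha Hb hc) Hn1 Hn2 Hn3 Hn4)).
  apply Csums_cmul, Csums_sub; apply sec_partial_fractions; assumption.
Qed.
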